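(* Let $(\Delta x,\Delta y)\in\mathbb{R}^2$, $(o_x,o_y)\in\mathbb{R}^2$, $(x_0,y_0,\theta_0)\in\mathbb{R}^3$ and $t_{\max}>0$. Consider the straight robot path $x(t)=x_0+t\cos\theta_0$, $y(t)=y_0+t\sin\theta_0$, $\theta(t)=\theta_0$ for $t\in[0,t_{\max}]$, and let the anchoring point have world coordinates $\tilde x(t)=x(t)+\cos\theta(t)\Delta x-\sin\theta(t)\Delta y$, $\tilde y(t)=y(t)+\sin\theta(t)\Delta x+\cos\theta(t)\Delta y$. Assume $(\tilde x(t),\tilde y(t))\neq(o_x,o_y)$ for all $t$. Then the relative angle function $$\Phi(t)=\arctan\left(\frac{o_y-\tilde y(t)}{o_x-\tilde x(t)}\right)-\theta(t)$$ is monotonic on $(0,t_{\max})$.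
   Context: $(\Delta x,\Delta y)$ is the position of the tether–robot anchoring point $s$ in the robot's egocentric frame, and $(o_x,o_y)$ is the (fixed) position of the last tether–obstacle contact point $o$ in the world frame. In the relative angle function, $\arctan\left(\frac{o_y-\tilde y}{o_x-\tilde x}\right)$ denotes the direction angle of the vector from $(\tilde x,\tilde y)$ to $(o_x,o_y)$, taken as a continuous (differentiable) branch along the path, whose derivative is $\frac{-\tilde y'(o_x-\tilde x)+\tilde x'(o_y-\tilde y)}{(o_x-\tilde x)^2+(o_y-\tilde y)^2}$. *)

From Stdlib Require Import Reals.
Open Scope R_scope.

Definition anchor_x (dx dy x0 th0 t : R) : R :=
  (x0 + t * cos th0) + cos th0 * dx - sin th0 * dy.
Definition anchor_y (dx dy y0 th0 t : R) : R :=
  (y0 + t * sin th0) + sin th0 * dx + cos th0 * dy.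

(* [a] is a direction angle of the (nonzero) vector (u, v), i.e. a value of
   "arctan(v/u)" in the sense of the angle of the vector (u,v). *)
Definition is_dir_angle (a u v : R) : Prop :=
  cos a * sqrt (u ^ 2 + v ^ 2) = u /\ sin a * sqrt (u ^ 2 + v ^ 2) = v.

Definition monotonic_on_open (f : R -> R) (a b : R) : Prop :=
  (forall s t, a < s -> s <= t -> t < b -> f s <= f t) \/
  (forall s t, a < s -> s <= t -> t < b -> f t <= f s).

(* Let w(t) be the vector from the anchoring point to o and alpha(t) its
   direction angle.  Since the path is straight, w(t) = w(0) - t e with
   e = (cos th0, sin th0), so the cross product of w(s) and w(t) equals
   (t - s) K for a constant K.  Hence sin (alpha t - alpha s) has the sign of
   (t - s) K.  A continuous angle difference starting at 0 whose sine keeps a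
   constant sign cannot change sign itself (it would have to pass through
   -pi/2 or pi/2), so alpha is nondecreasing if K >= 0 and nonincreasing if
   K < 0. *)
From Stdlib Require Import Reals Lra.
Open Scope R_scope.

Lemma continuous_nonneg_of_sin_nonneg (g : R -> R) (s t : R) :
  s <= t -> g s = 0 ->
  (forall x, s <= x <= t -> continuity_pt g x) ->
  (forall x, s <= x <= t -> 0 <= sin (g x)) -> 0 <= g t.
Proof.
  intros Hst Hs Hc Hsin.
  destruct (Rle_lt_dec 0 (g t)) as [|Hneg]; [assumption | exfalso].
  pose proof PI_RGT_0.
  destruct (Rle_lt_dec (- (PI / 2)) (g t)) as [Hge | Hlt].
  - assert (sin (g t) < 0) by (apply sin_lt_0_var; lra).
    specialize (Hsin t); lra.
  - destruct (Ranalysis5.IVT_interv (fun x => - (g x + PI / 2)) s t)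
      as [z [Hz Hgz]].
    + intros x Hx. apply continuity_pt_opp, continuity_pt_plus.
      * now apply Hc.
      * apply continuity_pt_const. now intros ? ?.
    + destruct Hst as [Hst | ->]; [exact Hst | lra].
    + rewrite Hs. lra.
    + lra.
    + assert (Hz2 : g z = - (PI / 2)) by lra.
      specialize (Hsin z Hz). rewrite Hz2, sin_neg, sin_PI2 in Hsin. lra.
Qed.

Lemma nondecreasing_of_sin_sub_nonneg (f : R -> R) (a b : R) :
  (forall x, a < x < b -> continuity_pt f x) ->
  (forall s x, a < s -> s <= x -> x < b -> 0 <= sin (f x - f s)) ->
  forall s t, a < s -> s <= t -> t < b -> f s <= f t.
Proof.
  intros Hc Hsin s t Has Hst Htb.
  enough (0 <= f t - f s) by lra.
  apply (continuous_nonneg_of_sin_nonneg (fun x => f x - f s) s t Hst).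
  - ring.
  - intros x Hx. apply continuity_pt_minus.
    + apply Hc; lra.
    + apply continuity_pt_const. now intros ? ?.
  - intros x Hx. apply Hsin; lra.
Qed.

Lemma sqrt_sum_sq_pos (u v : R) : (u, v) <> (0, 0) -> 0 < sqrt (u ^ 2 + v ^ 2).
Proof.
  intro Huv. apply sqrt_lt_R0.
  destruct (Req_dec u 0) as [-> | Hu].
  - destruct (Req_dec v 0) as [-> | Hv]; [contradiction |].
    pose proof (Rsqr_pos_lt v Hv). unfold Rsqr in *. nra.
  - pose proof (Rsqr_pos_lt u Hu). unfold Rsqr in *. nra.
Qed.

Lemma dir_angle_sin_sub (a b u v u' v' : R) :
  is_dir_angle a u v -> is_dir_angle b u' v' ->
  sin (b - a) * (sqrt (u ^ 2 + v ^ 2) * sqrt (u' ^ 2 + v' ^ 2))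
  = u * v' - v * u'.
Proof.
  intros [Ca Sa] [Cb Sb]. rewrite sin_minus.
  transitivity ((cos a * sqrt (u ^ 2 + v ^ 2)) * (sin b * sqrt (u' ^ 2 + v' ^ 2))
                - (sin a * sqrt (u ^ 2 + v ^ 2)) * (cos b * sqrt (u' ^ 2 + v' ^ 2))).
  - ring.
  - now rewrite Ca, Sa, Cb, Sb.
Qed.

Lemma dir_angle_sin_sub_nonneg (a b u v u' v' : R) :
  (u, v) <> (0, 0) -> (u', v') <> (0, 0) ->
  is_dir_angle a u v -> is_dir_angle b u' v' ->
  0 <= u * v' - v * u' -> 0 <= sin (b - a).
Proof.
  intros Huv Huv' Ha Hb Hcross.
  pose proof (sqrt_sum_sq_pos u v Huv). pose proof (sqrt_sum_sq_pos u' v' Huv').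
  rewrite <- (dir_angle_sin_sub a b u v u' v' Ha Hb) in Hcross.
  apply Rmult_le_reg_r with (sqrt (u ^ 2 + v ^ 2) * sqrt (u' ^ 2 + v' ^ 2)).
  - now apply Rmult_lt_0_compat.
  - lra.
Qed.

Lemma anchor_cross (dx dy ox oy x0 y0 th0 s t : R) :
  (ox - anchor_x dx dy x0 th0 s) * (oy - anchor_y dx dy y0 th0 t)
  - (oy - anchor_y dx dy y0 th0 s) * (ox - anchor_x dx dy x0 th0 t)
  = (t - s) * (cos th0 * (oy - anchor_y dx dy y0 th0 0)
               - sin th0 * (ox - anchor_x dx dy x0 th0 0)).
Proof. unfold anchor_x, anchor_y. ring. Qed.

Theorem theorem1 (dx dy ox oy x0 y0 th0 tmax : R) (alpha : R -> R) :
  0 < tmax ->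
  (forall t, 0 <= t <= tmax ->
     (anchor_x dx dy x0 th0 t, anchor_y dx dy y0 th0 t) <> (ox, oy)) ->
  (* alpha is a continuous branch of the direction angle of the vector
     from the anchoring point to o along the path *)
  (forall t, 0 <= t <= tmax ->
     is_dir_angle (alpha t) (ox - anchor_x dx dy x0 th0 t)
                            (oy - anchor_y dx dy y0 th0 t)) ->
  (forall t, 0 < t < tmax -> continuity_pt alpha t) ->
  monotonic_on_open (fun t => alpha t - th0) 0 tmax.
Proof.
  intros _ Hne Hdir Hcont.
  set (K := cos th0 * (oy - anchor_y dx dy y0 th0 0)
            - sin th0 * (ox - anchor_x dx dy x0 th0 0)).
  assert (Hw : forall t, 0 <= t <= tmax ->
            (ox - anchor_x dx dy x0 th0 t, oy - anchor_y dx dy y0 th0 t) <> (0, 0)).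
  { intros t Ht [= Ex Ey]. apply (Hne t Ht). f_equal; lra. }
  assert (Hsin : forall s x, 0 < s < tmax -> 0 < x < tmax ->
            0 <= (x - s) * K -> 0 <= sin (alpha x - alpha s)).
  { intros s x Hs Hx HK.
    apply (dir_angle_sin_sub_nonneg _ _ _ _ _ _ (Hw s ltac:(lra)) (Hw x ltac:(lra))
             (Hdir s ltac:(lra)) (Hdir x ltac:(lra))).
    now rewrite anchor_cross. }
  destruct (Rle_lt_dec 0 K) as [HK | HK].
  - left. intros s t Hs Hst Ht.
    enough (alpha s <= alpha t) by lra.
    apply (nondecreasing_of_sin_sub_nonneg alpha 0 tmax); auto.
    intros s' x ? ? ?. apply Hsin; try lra.
    apply Rmult_le_pos; lra.
  - right. intros s t Hs Hst Ht.
    enough (- alpha s <= - alpha t) by lra.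
    apply (nondecreasing_of_sin_sub_nonneg (fun x => - alpha x) 0 tmax); auto.
    + intros x Hx. now apply continuity_pt_opp, Hcont.
    + intros s' x ? ? ?. replace (- alpha x - - alpha s') with (alpha s' - alpha x)
        by ring.
      apply Hsin; try lra.
      replace ((s' - x) * K) with ((x - s') * - K) by ring.
      apply Rmult_le_pos; lra.
Qed.
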